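(* For all integers $k \geq 4$ and $n \geq 2k+3$, \[\iota(B'_{n,C(k)}, \{C_{k+1}\}) = \left\lfloor \frac{2n}{2k+3} \right\rfloor.\]
   Context: Graphs are finite and simple; $C_{m}$ denotes the cycle on $m$ vertices. For $D \subseteq V(G)$, $N[D]$ is the union of closed neighbourhoods of vertices of $D$; $D$ is $\{C_{k+1}\}$-isolating if $G - N[D]$ contains no $(k+1)$-cycle as a subgraph, and $\iota(G,\{C_{k+1}\})$ is the minimum size of such a set. Define $\mathrm{mod}^*$ as the usual modulo operation except that $ba \ \mathrm{mod}^*\ a = a$ (instead of $0$). For $r \geq 1$, $r < m$, $C_m^r$ is the graph on $[m]$ with edges $\{i, (i+j) \ \mathrm{mod}^*\ m\}$ for $i \in [m]$, $j \in [r]$. For $k \geq 2$: if $k$ is even, $C(k) = C_{2k+2}^{k/2}$; if $k$ is odd, $C(k)$ has vertex set $[2k+2]$ and edge set $E(C_{2k+2}^{(k-1)/2}) \cup \{\{i, i+\frac{k+1}{2}\} : i \in [\frac{k+1}{2}] \cup ([k+1+\frac{k+1}{2}] \setminus [k+1])\}$. For $n \geq 2k+3$, let $q = \lfloor n/(2k+3) \rfloor$ and $n = q(2k+3)+r$ with $0 \le r \le 2k+2$. Let $u_1,\dots,u_{q+r}$ be new vertices. Let $R$ be the empty graph if $r \le 1$, and if $r \ge 2$ let $R$ have vertex set $\{u_{q+j} : j \in [r]\}$ and edge set $\{u_{q+r}u_{q+j} : j \in [r-1]\}$. Let $G_1,\dots,G_q$ be pairwise disjoint copies of $C(k)$, disjoint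 from the $u$'s, with $v_{i,1},\dots,v_{i,2k+2}$ the vertices of $G_i$ corresponding to $1,\dots,2k+2$. Let $t=\min\{1,r\}$. The graph $B_{n,C(k)}$ has vertex set $\{u_1,\dots,u_{q+r}\} \cup \bigcup_{i=1}^q V(G_i)$ and edge set $\{u_iv_{i,1} : i \in [q]\} \cup \{u_iu_{i+1} : i \in [q+t-1]\} \cup E(R) \cup \bigcup_{i=1}^q E(G_i)$. Finally $B'_{n,C(k)}$ is the graph with the same vertex set as $B_{n,C(k)}$ and edge set $E(B_{n,C(k)}) \cup \binom{V(R)}{2}$ (i.e. $V(R)$ is made into a clique). *)

From mathcomp Require Import all_boot all_order.
Set Implicit Arguments. Unset Strict Implicit. Unset Printing Implicit Defensive.

Section Generic.
Variable V : finType.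
Variable adj : rel V.

Definition closed_nbhd (D : {set V}) : {set V} :=
  [set v | (v \in D) || [exists d in D, adj d v]].

Definition has_cycle_outside (m : nat) (S : {set V}) : bool :=
  [exists f : {ffun 'I_m -> V},
     [&& 3 <= m, injectiveb f, [forall i, f i \notin S]
       & [forall i : 'I_m, adj (f i) (f (ordS i))]]].

Definition isolating (m : nat) (D : {set V}) : bool :=
  ~~ has_cycle_outside m (closed_nbhd D).

(* iota(G, {C_m}) : minimum size of a {C_m}-isolating set.  (The whole vertex
   set is always isolating, so the bound #|V| is attained by a real set.) *)
Definition iso_num (m : nat) : nat :=
  \big[minn/#|V|]_(D : {set V} | isolating m D) #|D|.
End Generic.

Definition modstar (x m : nat) : nat := if x %% m == 0 then m else x %% m.

Definition powE (m r a b : nat) : bool :=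
  [&& 1 <= a, a <= m & has (fun j => b == modstar (a + j) m) (iota 1 r)].

Definition Ck_E (k a b : nat) : bool :=
  if ~~ odd k then powE (2 * k + 2) (k %/ 2) a b
  else powE (2 * k + 2) ((k - 1) %/ 2) a b
       || [&& ((1 <= a) && (a <= (k + 1) %/ 2))
              || ((k + 1 < a) && (a <= k + 1 + (k + 1) %/ 2))
            & b == a + (k + 1) %/ 2].

Definition Ck_adj (k a b : nat) : bool := Ck_E k a b || Ck_E k b a.

Definition qB (k n : nat) : nat := n %/ (2 * k + 3).
Definition rB (k n : nat) : nat := n %% (2 * k + 3).

(* inl a  ~  u_{a+1}  (a < q+r);   inr (i, j)  ~  v_{i+1, j+1}  (i < q, j < 2k+2) *)
Definition BV (k n : nat) : finType :=
  ('I_(qB k n + rB k n) + ('I_(qB k n) * 'I_(2 * k + 2)))%type.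

Definition Bp_E (k n : nat) (x y : BV k n) : bool :=
  let q := qB k n in let r := rB k n in let t := minn 1 r in
  match x, y with
  | inl a, inr (i, j) => (nat_of_ord a == nat_of_ord i) && (nat_of_ord j == 0)  (* u_i v_{i,1}, i in [q] *)
  | inl a, inl b =>
      ((nat_of_ord b == a.+1) && (a.+1 < q + t))          (* u_i u_{i+1}, i in [q+t-1] *)
      || [&& 2 <= r, nat_of_ord a != b, q <= a & q <= b]  (* V(R) is a clique (contains E(R)) *)
  | inr (i, j), inr (i', j') =>
      (i == i') && Ck_adj k j.+1 j'.+1
  | _, _ => false
  end.

Definition Bp_adj (k n : nat) : rel (BV k n) := fun x y => Bp_E x y || Bp_E y x.

From mathcomp Require Import all_boot all_order.
From mathcomp Require Import zify.
Set Implicit Arguments. Unset Strict Implicit. Unset Printing Implicit Defensive.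

(* Write k = 2p + e with e in {0, 1}.  In C(k) the closed neighbourhood of any
   vertex misses exactly k + 1 cyclically consecutive vertices, and these carry a
   (k + 1)-cycle since steps of length 1 and 2 are edges (p >= 2).  Hence an
   isolating set meets every block {u_i} + G_i (i <= q) at least twice, and meets
   R when r >= k + 2, for otherwise u_{q+2}, ..., u_{q+r} is a clique on at least
   k + 1 vertices outside its closed neighbourhood.  Conversely the antipodal
   vertices 1 and k + 2 dominate C(k): taking them in every copy leaves only R
   undominated, which has too few vertices when r <= k and is dominated by one
   extra vertex u_{q+r} when r >= k + 2; when r = k + 1, trading v_{q,1} for u_q
   still works.  Finally floor(2n / (2k + 3)) = 2q + [r >= k + 2]. *)

Lemma leq_of_injective_bounded m c (g : 'I_m -> nat) :
  injective g -> (forall i, g i < c) -> m <= c.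
Proof.
move=> g_inj g_lt.
have gc_inj : injective (fun i => Ordinal (g_lt i)) by move=> i j [] /g_inj.
by have := leq_card _ gc_inj; rewrite !card_ord.
Qed.

Lemma ordS_val N (t : 'I_N) : nat_of_ord (ordS t) = if t.+1 < N then t.+1 else 0.
Proof.
rewrite /=; case: ltnP => t_lt; first by rewrite modn_small.
by rewrite (_ : t.+1 = N) ?modnn //; have := ltn_ord t; lia.
Qed.

Lemma ordS_invariant_const (T : Type) N (h : 'I_N.+1 -> T) :
  (forall t, h (ordS t) = h t) -> forall t, h t = h ord0.
Proof.
move=> hS t; rewrite -(inord_val t).
elim: (nat_of_ord t) (ltn_ord t) => [|i IHi] i_lt.
  by congr h; apply: val_inj; rewrite /= inordK.
rewrite -IHi ?(ltnW i_lt) // -[RHS]hS; congr h; apply: ord_inj.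
by rewrite ordS_val !inordK ?i_lt //; lia.
Qed.

Section CycleIsolation.
Variables (V : finType) (adj : rel V).

Lemma has_cycle_outsideP m (S : {set V}) :
  reflect (exists f : 'I_m -> V, [/\ 3 <= m, injective f, forall i, f i \notin S
                                   & forall i, adj (f i) (f (ordS i))])
          (has_cycle_outside adj m S).
Proof.
apply: (iffP existsP) => [[f /and4P[m3 /injectiveP f_inj /forallP fS /forallP fadj]] |
                          [f [m3 f_inj fS fadj]]].
  by exists f.
exists [ffun i => f i]; apply/and4P; split=> //.
- by apply/injectiveP => i j; rewrite !ffunE => /f_inj.
- by apply/forallP => i; rewrite ffunE.
- by apply/forallP => i; rewrite !ffunE.
Qed.

Lemma mem_closed_nbhd (D : {set V}) x : x \in D -> x \in closed_nbhd adj D.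
Proof. by rewrite inE => ->. Qed.

Lemma closed_nbhd_adj (D : {set V}) d x : d \in D -> adj d x -> x \in closed_nbhd adj D.
Proof. by move=> dD dx; rewrite inE; apply/orP; right; apply/existsP; exists d; rewrite dD. Qed.

Lemma closed_nbhdS (D D' : {set V}) : D \subset D' -> {subset closed_nbhd adj D <= closed_nbhd adj D'}.
Proof.
move=> /subsetP DD' x; rewrite !inE => /orP[/DD' -> // | /existsP[d /andP[/DD' dD' dx]]].
by apply/orP; right; apply/existsP; exists d; rewrite dD'.
Qed.

Lemma isolating_dominating m (D : {set V}) :
  (forall x, x \in closed_nbhd adj D) -> isolating adj m D.
Proof.
move=> dom; apply/negP => /has_cycle_outsideP[f [m3 _ fS _]].
by have := fS (Ordinal (leq_trans (isT : 0 < 3) m3)); rewrite dom.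
Qed.

Lemma isolatingT m : isolating adj m setT.
Proof. by apply: isolating_dominating => x; rewrite mem_closed_nbhd ?inE. Qed.

Lemma iso_num_le m (D : {set V}) : isolating adj m D -> iso_num adj m <= #|D|.
Proof.
move=> isoD; rewrite /iso_num.
have : D \in index_enum {set V} by rewrite mem_index_enum.
elim: (index_enum _) => [//|D' s IHs]; rewrite inE big_cons.
case/orP => [/eqP <- | Ds]; first by rewrite isoD geq_minl.
by case: ifP => _; rewrite ?geq_min IHs ?orbT.
Qed.

Lemma iso_num_ge m L : (forall D, isolating adj m D -> L <= #|D|) -> L <= iso_num adj m.
Proof.
move=> bound; rewrite /iso_num; elim/big_ind: _ => //.
- by rewrite -cardsT; apply: bound; exact: isolatingT.
- by move=> x y Lx Ly; rewrite leq_min Lx Ly.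
Qed.

Lemma cycle_outside_labels m (S : {set V}) (g : V -> nat) c :
  {in [predC S] &, injective g} -> {in [predC S], forall x, g x < c} ->
  has_cycle_outside adj m S -> m <= c.
Proof.
move=> g_inj g_lt /has_cycle_outsideP[f [_ f_inj fS _]].
apply: (@leq_of_injective_bounded _ _ (g \o f)) => [i j /= gij | i /=].
  by apply: f_inj; apply: g_inj gij; rewrite inE.
by apply: g_lt; rewrite inE.
Qed.

Lemma cycle_outside_side m (S : {set V}) (A : pred V) :
  {in [predC S] &, forall x y, adj x y -> A x = A y} ->
  has_cycle_outside adj m S ->
  has_cycle_outside adj m (S :|: [set x | ~~ A x]) \/
  has_cycle_outside adj m (S :|: [set x | A x]).
Proof.
move=> A_closed /has_cycle_outsideP[f [m3 f_inj fS fadj]].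
case: m m3 f f_inj fS fadj => // m m3 f f_inj fS fadj.
have A_const : forall i, A (f i) = A (f ord0).
  apply: (ordS_invariant_const (h := A \o f)) => i /=.
  by apply: esym; apply: A_closed (fadj i); rewrite inE.
case A0: (A (f ord0)); [left | right]; apply/has_cycle_outsideP; exists f; split=> // i;
  by rewrite !inE negb_or fS /= A_const A0.
Qed.
End CycleIsolation.

Lemma modn_lt_double z m : z < 2 * m ->
  z < m /\ z %% m = z \/ m <= z /\ z %% m = z - m.
Proof.
move=> z_lt; case: (ltnP z m) => z_m; [left | right]; split=> //; first exact: modn_small.
by rewrite -{1}(subnK z_m) modnDr modn_small //; lia.
Qed.

Lemma modstarE x m : 0 < x < 2 * m -> modstar x m = if x <= m then x else x - m.
Proof.
move=> /andP[x_gt0 /modn_lt_double]; rewrite /modstar.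
by case=> -[x_m ->]; case: eqP => ?; case: leqP => ?; lia.
Qed.

Lemma powE_eq m r a b : 0 < r < m ->
  powE m r a b = [&& 0 < a <= m, 0 < b <= m & (a < b <= a + r) || (b + m <= a + r)].
Proof.
move=> /andP[r_gt0 r_lt]; apply/idP/idP.
  case/and3P => a_ge1 a_le /hasP[j]; rewrite mem_iota => j_range /eqP ->.
  by rewrite modstarE; [case: ifP => ? | ]; lia.
case/and3P => a_range b_range ab; apply/and3P; split; try lia.
apply/hasP; exists (if a < b then b - a else b + m - a); first by rewrite mem_iota; case: ifP; lia.
by apply/eqP; case: ifP => ?; rewrite modstarE; [case: ifP => ? | | case: ifP => ? | ]; lia.
Qed.

(* Listing [0, k] as 0, 2, 4, ... and then the odd numbers downwards, cyclically
   consecutive entries differ by 1 or 2. *)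
Definition zigzag (k t : nat) : nat := if 2 * t <= k then 2 * t else 2 * (k - t) + 1.

Lemma zigzag_le k t : t <= k -> zigzag k t <= k.
Proof. by rewrite /zigzag; case: ifP; lia. Qed.

Lemma zigzag_inj k t t' : t <= k -> t' <= k -> zigzag k t = zigzag k t' -> t = t'.
Proof. by rewrite /zigzag; case: ifP; case: ifP; lia. Qed.

Lemma zigzag_ordS k (t : 'I_k.+1) : 0 < k ->
  [/\ zigzag k t != zigzag k (ordS t), zigzag k t <= zigzag k (ordS t) + 2
    & zigzag k (ordS t) <= zigzag k t + 2].
Proof.
move=> k_gt0; have := ltn_ord t; rewrite ordS_val.
by case: ifP => ?; rewrite /zigzag ?muln0 ?leq0n; do ![case: ifP => ?]; split; lia.
Qed.

Section CkAdjacency.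
Variables p e : nat.
Hypotheses (e_le1 : e <= 1) (p_ge2 : 2 <= p).
Local Notation k := (2 * p + e).
Local Notation m := (2 * (2 * p + e) + 2).

Fact m_gt0 : 0 < m. Proof. by rewrite addn2. Qed.
Definition ck_vertex z : 'I_m := Ordinal (ltn_pmod z m_gt0).

(* Vertex [a.+1] of C(k) is encoded by [a < m]; [ck_step a b] says that [b] is
   reached from [a] by a generating edge: a power edge [a -- a + j] (possibly
   across the wrap-around) or, for odd [k], a chord [a -- a + (k + 1) / 2]. *)
Definition ck_step (a b : nat) : bool :=
  [|| a < b <= a + p, b + m <= a + p
    | [&& e == 1, (a <= p) || (2 * p + 2 <= a <= 3 * p + 2) & b == a + p + 1]].

Lemma odd_k : odd k = (e == 1).
Proof. by case: e e_le1 => [|[|]] //= _; rewrite ?addn0 ?addn1 /= ?oddS mul2n odd_double. Qed.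

Lemma Ck_E_step a b : a < m -> b < m -> Ck_E k a.+1 b.+1 = ck_step a b.
Proof.
move=> a_lt b_lt; rewrite /Ck_E odd_k; case: eqP => [e1 | e0] /=.
  have -> : (k - 1) %/ 2 = p by lia.
  have -> : (k + 1) %/ 2 = p + 1 by lia.
  by rewrite powE_eq /ck_step; lia.
have -> : k %/ 2 = p by lia.
by rewrite powE_eq /ck_step; lia.
Qed.

Lemma Ck_adj_step a b : a < m -> b < m -> Ck_adj k a.+1 b.+1 = ck_step a b || ck_step b a.
Proof. by move=> a_lt b_lt; rewrite /Ck_adj !Ck_E_step. Qed.

Lemma Ck_adj_near s d d' : s < m -> d <= k -> d' <= k ->
  [/\ d != d', d <= d' + 2 & d' <= d + 2] ->
  Ck_adj k (ck_vertex (s + d)).+1 (ck_vertex (s + d')).+1.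
Proof.
move=> s_lt d_le d'_le /and3P dd' /=.
have [[? ->]|[? ->]] := @modn_lt_double (s + d) m ltac:(lia);
have [[? ->]|[? ->]] := @modn_lt_double (s + d') m ltac:(lia);
by rewrite Ck_adj_step /ck_step; lia.
Qed.

Definition window_cycle s (t : 'I_k.+1) : 'I_m := ck_vertex (s + zigzag k t).

Lemma window_cycle_inj s : s < m -> injective (window_cycle s).
Proof.
move=> s_lt t t' /(congr1 val) /=.
have t_le := ltnSE (ltn_ord t); have t'_le := ltnSE (ltn_ord t').
have z_le := zigzag_le t_le; have z'_le := zigzag_le t'_le.
have [[? ->]|[? ->]] := @modn_lt_double (s + zigzag k t) m ltac:(lia);
have [[? ->]|[? ->]] := @modn_lt_double (s + zigzag k t') m ltac:(lia);
by move=> zz; apply: val_inj; apply: (zigzag_inj t_le t'_le); lia.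
Qed.

Lemma window_cycle_adj s t : s < m ->
  Ck_adj k (window_cycle s t).+1 (window_cycle s (ordS t)).+1.
Proof.
move=> s_lt; have t_le := ltnSE (ltn_ord t); have t'_le := ltnSE (ltn_ord (ordS t)).
rewrite /window_cycle; apply: (Ck_adj_near s_lt (zigzag_le t_le) (zigzag_le t'_le)).
by apply: zigzag_ordS; lia.
Qed.

(* The non-neighbours of [x] form the window of [k + 1] consecutive vertices
   just past the power-edge neighbourhood of [x], shifted by one more when [x]
   is the lower end of a chord. *)
Lemma closed_nbhd_window x : x < m -> exists2 s, s < m &
  forall d, d <= k -> (s + d) %% m != x /\ ~~ Ck_adj k x.+1 ((s + d) %% m).+1.
Proof.
move=> x_lt.
have [s0 s0_def] : exists s0,
  s0 = x + p + 1 + ((e == 1) && ((x <= p) || (2 * p + 2 <= x <= 3 * p + 2))) by eexists.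
have [s s_lt s_eq] : exists2 s, s < m & s = s0 \/ s + m = s0.
  exists (s0 %% m); first exact: ltn_pmod _ m_gt0.
  by have [[_ ->]|[? ->]] := @modn_lt_double s0 m ltac:(lia); lia.
exists s => // d d_le.
have [[? ->]|[? ->]] := @modn_lt_double (s + d) m ltac:(lia);
  (split; first by apply/eqP; lia);
  by rewrite Ck_adj_step /ck_step; lia.
Qed.

Lemma Ck_cycle_outside_closed_nbhd x : x < m -> exists f : 'I_k.+1 -> 'I_m,
  [/\ injective f, forall t, f t != x :> nat, forall t, ~~ Ck_adj k x.+1 (f t).+1
    & forall t, Ck_adj k (f t).+1 (f (ordS t)).+1].
Proof.
move=> x_lt; have [s s_lt window] := closed_nbhd_window x_lt.
exists (window_cycle s); split=> [||t|t]; first exact: window_cycle_inj.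
- by move=> t; apply: (proj1 (window _ _)); apply: zigzag_le; rewrite -ltnS.
- by apply: (proj2 (window _ _)); apply: zigzag_le; rewrite -ltnS.
- exact: window_cycle_adj.
Qed.

Lemma Ck_arc_closed_nbhd0 j : j < m -> j <= p + e \/ m - p <= j -> j = 0 \/ Ck_adj k 1 j.+1.
Proof.
move=> j_lt j_range; have [->|j_gt0] := posnP j; [by left | right].
by rewrite (@Ck_adj_step 0) /ck_step; lia.
Qed.

Lemma Ck_outside_closed_nbhd_antipode j : j < m -> j != k + 1 ->
  ~~ Ck_adj k (k + 1).+1 j.+1 -> j <= p + e \/ m - p <= j.
Proof. by move=> j_lt; rewrite Ck_adj_step /ck_step; lia. Qed.

End CkAdjacency.

Section Bgraph.
Variables p e n : nat.
Hypotheses (e_le1 : e <= 1) (p_ge2 : 2 <= p) (n_ge : 2 * (2 * p + e) + 3 <= n).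
Local Notation k := (2 * p + e).
Local Notation m := (2 * (2 * p + e) + 2).
Local Notation q := (qB (2 * p + e) n).
Local Notation r := (rB (2 * p + e) n).
Local Notation V := (BV (2 * p + e) n).
Local Notation adj := (@Bp_adj (2 * p + e) n).
Local Notation N := (closed_nbhd adj).
Local Notation vx := (ck_vertex p e).

Lemma q_gt0 : 0 < q.
Proof. by rewrite /qB divn_gt0 //; lia. Qed.

Lemma adj_rr i j i' j' : adj (inr (i, j)) (inr (i', j')) = (i == i') && Ck_adj k j.+1 j'.+1.
Proof.
by rewrite /Bp_adj /= eq_sym [Ck_adj k j'.+1 _]orbC orbb.
Qed.

Lemma adj_lr (a : 'I_(q + r)) i j : adj (inl a) (inr (i, j)) = (a == i :> nat) && (j == 0 :> nat).
Proof. by rewrite /Bp_adj /= orbF. Qed.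

Lemma adj_rl (a : 'I_(q + r)) i j : adj (inr (i, j)) (inl a) = (a == i :> nat) && (j == 0 :> nat).
Proof. by []. Qed.

Lemma adj_ll (a b : 'I_(q + r)) : adj (inl a) (inl b) =
  [|| (b == a.+1 :> nat) && (a.+1 < q + minn 1 r), (a == b.+1 :> nat) && (b.+1 < q + minn 1 r)
    | [&& 2 <= r, a != b :> nat, q <= a & q <= b]].
Proof. by rewrite /Bp_adj /=; lia. Qed.

Lemma copy_cycle_outside (S : {set V}) (i : 'I_q) (f : 'I_k.+1 -> 'I_m) :
  injective f -> (forall t, inr (i, f t) \notin S) ->
  (forall t, Ck_adj k (f t).+1 (f (ordS t)).+1) -> has_cycle_outside adj k.+1 S.
Proof.
move=> f_inj fS fadj; apply/has_cycle_outsideP.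
exists (fun t => inr (i, f t)); split=> //; first lia.
- by move=> t t' [] /f_inj.
- by move=> t; rewrite adj_rr eqxx fadj.
Qed.

(* Each [u_i] forms one block with its copy [G_i] (blocks numbered from 0);
   the vertices of [R] form block [q]. *)
Definition block (x : V) : nat :=
  match x with inl a => minn a q | inr (i, _) => i end.

Lemma block_le x : block x <= q.
Proof. by case: x => [a | [i j]] /=; [exact: geq_minr | exact: ltnW]. Qed.

Lemma card_blocks (D : {set V}) : #|D| = \sum_(b < q.+1) #|[set x in D | block x == b]|.
Proof.
rewrite -sum1_card (partition_big (fun x => (inord (block x) : 'I_q.+1)) xpredT) //=.
apply: eq_bigr => b _; rewrite sum1dep_card; apply: eq_card => x; rewrite !inE.
by case: (x \in D) => //=; rewrite -val_eqE /= inordK // ltnS block_le.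
Qed.

Lemma copy_closed_nbhd_single (D : {set V}) (i : 'I_q) :
  #|[set x in D | block x == i]| <= 1 ->
  exists x0 : 'I_m, forall j, inr (i, j) \in N D -> j = x0 \/ Ck_adj k x0.+1 j.+1.
Proof.
move/card_le1_eqP => single.
have in_block x : x \in D -> block x == i -> x \in [set x in D | block x == i].
  by move=> xD xi; rewrite inE xD xi.
pose x0 := if [pick j | inr (i, j) \in D] is Some j then j else vx 0.
exists x0 => j; rewrite inE => /orP[jD | /existsP[[a | [i' j']] /andP[dD dj]]].
- left; rewrite /x0; case: pickP => [j' j'D | noD]; last by have := noD j; rewrite jD.
  by case: (single _ _ (in_block _ j'D (eqxx _)) (in_block _ jD (eqxx _))).
- move: dj; rewrite adj_lr => /andP[/eqP ai /eqP j0]; left; rewrite /x0.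
  case: pickP => [j' j'D | _]; last by apply: val_inj; rewrite /= j0 mod0n.
  have ab : block (inl a) == i by rewrite /= ai; apply/eqP/minn_idPl/ltnW.
  by have := single _ _ (in_block _ j'D (eqxx _)) (in_block _ dD ab).
- move: dj; rewrite adj_rr => /andP[/eqP ii' jadj]; subst i'; right; rewrite /x0.
  case: pickP => [j'' j''D | noD]; last by have := noD j'; rewrite dD.
  by case: (single _ _ (in_block _ j''D (eqxx _)) (in_block _ dD (eqxx _))) => <-.
Qed.

Lemma block_card_ge2 (D : {set V}) (i : 'I_q) : isolating adj k.+1 D ->
  2 <= #|[set x in D | block x == i]|.
Proof.
move=> isoD; rewrite leqNgt ltnS; apply/negP => /copy_closed_nbhd_single[x0 x0_dom].
have [f [f_inj f_x0 f_adj f_cyc]] := Ck_cycle_outside_closed_nbhd e_le1 p_ge2 (ltn_ord x0).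
move/negP: isoD; apply; apply: (copy_cycle_outside f_inj _ f_cyc) => t.
apply/negP => /x0_dom[ftx0 | x0ft]; first by move: (f_x0 t); rewrite ftx0 eqxx.
by move: (f_adj t); rewrite x0ft.
Qed.

Fact qr_gt0 : 0 < q + r.
Proof. by rewrite ltn_addr // q_gt0. Qed.

Definition u_at z : 'I_(q + r) := insubd (Ordinal qr_gt0) z.

Lemma u_atK z : z < q + r -> nat_of_ord (u_at z) = z.
Proof. by move=> z_lt; rewrite /u_at -[nat_of_ord _]/(val _) val_insubd z_lt. Qed.

Lemma block_card_ge1 (D : {set V}) : isolating adj k.+1 D -> k + 2 <= r ->
  1 <= #|[set x in D | block x == q]|.
Proof.
move=> isoD r_ge; rewrite lt0n; apply/negP => /eqP/cards0_eq tail_free.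
have D_block x : x \in D -> block x < q.
  move=> xD; rewrite ltn_neqAle block_le andbT; apply/negP => xq.
  by have := in_set0 x; rewrite -tail_free inE xD xq.
have u_atK' (t : 'I_k.+1) : nat_of_ord (u_at (q + 1 + t)) = q + 1 + t.
  by apply: u_atK; have := ltn_ord t; lia.
move/negP: isoD; apply; apply/has_cycle_outsideP.
exists (fun t : 'I_k.+1 => inl (u_at (q + 1 + t))); split.
- lia.
- by move=> t t' [] /(congr1 val) /=; rewrite !u_atK' => /addnI /val_inj.
- move=> t; rewrite inE negb_or; apply/andP; split.
    by apply/negP => /D_block /=; rewrite u_atK'; lia.
  apply/existsP => -[[a | [i j]] /andP[/D_block /= d_lt]].
    by rewrite adj_ll u_atK'; lia.
  by rewrite adj_rl u_atK'; lia.
- by move=> t; rewrite adj_ll !u_atK' ordS_val; case: ifP; lia.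
Qed.

Lemma isolating_card_ge (D : {set V}) : isolating adj k.+1 D -> 2 * q + (k + 2 <= r) <= #|D|.
Proof.
move=> isoD; rewrite card_blocks big_ord_recr /=.
apply: leq_add.
  have -> : 2 * q = \sum_(b < q) 2 by rewrite big_const_ord iter_addn_0 mulnC.
  by apply: leq_sum => b _; exact: block_card_ge2.
by case: (leqP (k + 2) r) => // r_ge; exact: block_card_ge1.
Qed.

Lemma vx0 : nat_of_ord (vx 0) = 0.
Proof. exact: mod0n. Qed.

Lemma vxK1 : nat_of_ord (vx (k + 1)) = k + 1.
Proof. by rewrite /= modn_small //; lia. Qed.

Lemma copy_dominated (D : {set V}) (i : 'I_q) :
  inr (i, vx 0) \in D -> inr (i, vx (k + 1)) \in D -> forall j, inr (i, j) \in N D.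
Proof.
move=> v0D vkD j.
have [j_k | j_nk] := eqVneq (nat_of_ord j) (k + 1).
  by apply: mem_closed_nbhd; rewrite (_ : j = vx (k + 1)) //; apply: ord_inj; rewrite vxK1.
have [kj | /(Ck_outside_closed_nbhd_antipode e_le1 p_ge2 (ltn_ord j) j_nk) j_range] := boolP (Ck_adj k (k + 1).+1 j.+1).
  by apply: (closed_nbhd_adj vkD); rewrite adj_rr eqxx vxK1.
have [j0 | j_adj0] := Ck_arc_closed_nbhd0 e_le1 p_ge2 (ltn_ord j) j_range.
  by apply: mem_closed_nbhd; rewrite (_ : j = vx 0) //; apply: ord_inj; rewrite j0 vx0.
by apply: (closed_nbhd_adj v0D); rewrite adj_rr eqxx vx0.
Qed.

Lemma u_dominated (D : {set V}) (a : 'I_(q + r)) (i : 'I_q) :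
  a = i :> nat -> inr (i, vx 0) \in D -> inl a \in N D.
Proof. by move=> ai v0D; apply: (closed_nbhd_adj v0D); rewrite adj_rl ai vx0 !eqxx. Qed.

Definition antipodes : {set V} :=
  [set inr (ib.1, if ib.2 then vx (k + 1) else vx 0) | ib : 'I_q * bool].

Lemma antipodes_card : #|antipodes| <= 2 * q.
Proof.
apply: leq_trans (leq_imset_card _ _) _.
by rewrite card_prod card_ord card_bool mulnC.
Qed.

Lemma antipode0 (i : 'I_q) : inr (i, vx 0) \in antipodes.
Proof. by apply/imsetP; exists (i, false). Qed.

Lemma antipodeK (i : 'I_q) : inr (i, vx (k + 1)) \in antipodes.
Proof. by apply/imsetP; exists (i, true). Qed.

Lemma antipodes_dominate x : block x < q -> x \in N antipodes.
Proof.
case: x => [a | [i j]] /= x_lt; last by apply: copy_dominated; [exact: antipode0 | exact: antipodeK].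
have a_lt : a < q by move: x_lt; rewrite gtn_min ltnn orbF.
by apply: (u_dominated (i := Ordinal a_lt)) => //; exact: antipode0.
Qed.

Lemma tail_vertex x : q <= block x -> exists2 a : 'I_(q + r), x = inl a & q <= a.
Proof. by case: x => [a | [i j]] /=; [rewrite leq_min => /andP[? _]; exists a | rewrite leqNgt ltn_ord]. Qed.

Lemma antipodes_isolating : r <= k -> isolating adj k.+1 antipodes.
Proof.
move=> r_le; apply/negP => cyc.
have tail x : x \in [predC N antipodes] -> exists2 a : 'I_(q + r), x = inl a & q <= a.
  by move=> /negP x_out; apply: tail_vertex; rewrite leqNgt; apply/negP => /antipodes_dominate.
suff : k.+1 <= r by lia.
apply: (cycle_outside_labels (g := fun x : V => if x is inl a then a - q else 0) _ _ cyc).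
  by move=> x y /tail[a -> a_ge] /tail[b -> b_ge] /= ab; congr inl; apply: ord_inj; lia.
by move=> x /tail[a -> a_ge] /=; have := ltn_ord a; lia.
Qed.

Lemma antipodes_tail_isolating : k + 2 <= r ->
  isolating adj k.+1 (inl (u_at (q + r - 1)) |: antipodes).
Proof.
move=> r_ge; apply: isolating_dominating => x.
have [x_lt | /tail_vertex[a -> a_ge]] := ltnP (block x) q.
  by apply: closed_nbhdS (subsetUr _ _) _ _; exact: antipodes_dominate.
have last_val : nat_of_ord (u_at (q + r - 1)) = q + r - 1 by apply: u_atK; lia.
have [a_last | a_nlast] := eqVneq (nat_of_ord a) (q + r - 1).
  by apply: mem_closed_nbhd; rewrite (_ : a = u_at (q + r - 1)) ?setU11 //; apply: ord_inj; rewrite last_val.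
by apply: (closed_nbhd_adj (setU11 _ _)); rewrite adj_ll last_val; lia.
Qed.

Lemma inr_eqE i j i' j' : (inr (i, j) == inr (i', j') :> V) = (i == i') && (j == j').
Proof. by apply/eqP/andP => [[-> ->] | [/eqP -> /eqP ->]]. Qed.

Fact last_copy_lt : q.-1 < q.
Proof. by rewrite prednK ?q_gt0. Qed.

Definition last_copy : 'I_q := Ordinal last_copy_lt.

(* For [r = k + 1], trading [v_{q,1}] for [u_q] also dominates [u_{q+1}]; what
   stays undominated is [k] vertices of [R] and [k] vertices of [G_q], with no
   edge between the two parts. *)
Definition shifted_antipodes : {set V} :=
  inl (u_at q.-1) |: (antipodes :\ inr (last_copy, vx 0)).

Lemma shifted_antipodes_card : #|shifted_antipodes| <= 2 * q.
Proof.
rewrite cardsU1; apply: (leq_trans _ antipodes_card).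
by rewrite (cardsD1 (inr (last_copy, vx 0)) antipodes) antipode0 leq_add2r leq_b1.
Qed.

Lemma shifted_antipodes_undominated x : r = k + 1 -> x \notin N shifted_antipodes ->
  (exists2 a : 'I_(q + r), x = inl a & q + 1 <= a) \/
  (exists2 j : 'I_m, x = inr (last_copy, j) & 0 < j /\ (j <= p + e \/ m - p <= j)).
Proof.
move=> r_eq x_out.
have u_last : nat_of_ord (u_at q.-1) = q.-1 by apply: u_atK; have := q_gt0; lia.
have u_lastD : inl (u_at q.-1) \in shifted_antipodes by exact: setU11.
have kept y : y != inr (last_copy, vx 0) -> y \in antipodes -> y \in shifted_antipodes.
  by move=> y_ne yA; rewrite !inE y_ne yA orbT.
case: x x_out => [a | [i j]] x_out.
  left; exists a => //; rewrite leqNgt; apply: contra x_out => a_le.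
  have [a_lt | a_ge] := ltnP a q.-1.
    have a_q : a < q by lia.
    apply: (u_dominated (i := Ordinal a_q)) => //; apply: kept; last exact: antipode0.
    by rewrite inr_eqE -val_eqE /=; lia.
  have [a_last | a_nlast] := eqVneq (nat_of_ord a) q.-1.
    by apply: mem_closed_nbhd; rewrite (_ : a = u_at q.-1) //; apply: ord_inj; rewrite u_last.
  by apply: (closed_nbhd_adj u_lastD); rewrite adj_ll u_last; lia.
have [i_last | i_nlast] := eqVneq i last_copy; last first.
  by move: x_out; rewrite copy_dominated // kept ?antipode0 ?antipodeK // inr_eqE (negPf i_nlast).
subst i; right; exists j => //.
have [j0 | j_gt0] := posnP j.
  by move: x_out; rewrite (closed_nbhd_adj u_lastD) // adj_lr u_last j0 !eqxx.
have vkD : inr (last_copy, vx (k + 1)) \in shifted_antipodes.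
  apply: kept; last exact: antipodeK.
  by rewrite inr_eqE negb_and; apply/orP; right; apply/eqP => /(congr1 (@nat_of_ord _)); rewrite vxK1 vx0 addn1.
split=> //; apply: (Ck_outside_closed_nbhd_antipode e_le1 p_ge2 (ltn_ord j)).
  apply: contra x_out => /eqP j_k; apply: mem_closed_nbhd.
  by rewrite (_ : j = vx (k + 1)) //; apply: ord_inj; rewrite vxK1.
by apply: contra x_out => kj; apply: (closed_nbhd_adj vkD); rewrite adj_rr eqxx vxK1.
Qed.

Lemma shifted_antipodes_isolating : r = k + 1 -> isolating adj k.+1 shifted_antipodes.
Proof.
move=> r_eq; apply/negP => cyc.
have out x : x \in [predC N shifted_antipodes] -> _ := shifted_antipodes_undominated r_eq.
pose is_inl (x : V) := if x is inl _ then true else false.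
have sides : {in [predC N shifted_antipodes] &, forall x y, adj x y -> is_inl x = is_inl y}.
  move=> x y /out[[a -> a_ge] | [j -> [j_gt0 _]]] /out[[b -> b_ge] | [j' -> [j'_gt0 _]]] //.
    by rewrite adj_lr; lia.
  by rewrite adj_rl; lia.
suff : k.+1 <= k by lia.
case: (cycle_outside_side sides cyc) => {}cyc.
  have tail x : x \in [predC N shifted_antipodes :|: [set y | ~~ is_inl y]] ->
      exists2 a : 'I_(q + r), x = inl a & q + 1 <= a.
    rewrite inE in_setU in_set negb_or negbK => /andP[x_out x_inl].
    by case: (out x x_out) => // -[j x_eq _]; rewrite x_eq in x_inl.
  apply: (cycle_outside_labels (g := fun x : V => if x is inl a then a - (q + 1) else 0) _ _ cyc).
    by move=> x y /tail[a -> a_ge] /tail[b -> b_ge] /= ab; congr inl; apply: ord_inj; lia.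
  by move=> x /tail[a -> a_ge] /=; have := ltn_ord a; lia.
have copy x : x \in [predC N shifted_antipodes :|: [set y | is_inl y]] ->
    exists2 j : 'I_m, x = inr (last_copy, j) & 0 < j /\ (j <= p + e \/ m - p <= j).
  rewrite inE in_setU in_set negb_or => /andP[x_out x_inr].
  by case: (out x x_out) => // -[a x_eq _]; rewrite x_eq in x_inr.
pose label (j : nat) := if j <= p + e then j - 1 else j + k - m.
apply: (cycle_outside_labels (g := fun x : V => if x is inr (_, j) then label j else 0) _ _ cyc).
  move=> x y /copy[j -> j_range] /copy[j' -> j'_range]; rewrite /label /=.
  by case: ifP => ?; case: ifP => ? jj'; congr (inr (_, _)); apply: ord_inj; lia.
by move=> x /copy[j -> j_range]; rewrite /label /=; have := ltn_ord j; case: ifP; lia.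
Qed.

Lemma iso_num_Bp : iso_num adj k.+1 = 2 * q + (k + 2 <= r).
Proof.
apply/eqP; rewrite eqn_leq (iso_num_ge isolating_card_ge) andbT.
have [r_lt | r_gt | r_eq] := ltngtP r (k + 1).
- apply: leq_trans (iso_num_le (antipodes_isolating _)) _; first lia.
  exact: leq_trans antipodes_card (leq_addr _ _).
- have -> : (k + 2 <= r) = true by lia.
  apply: leq_trans (iso_num_le (antipodes_tail_isolating _)) _; first lia.
  by rewrite cardsU1 addnC leq_add ?antipodes_card ?leq_b1.
- apply: leq_trans (iso_num_le (shifted_antipodes_isolating r_eq)) _.
  exact: leq_trans shifted_antipodes_card (leq_addr _ _).
Qed.

End Bgraph.

Lemma divn_double n d : 0 < d -> (2 * n) %/ d = 2 * (n %/ d) + (d <= 2 * (n %% d)).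
Proof.
move=> d_gt0; have r_lt := ltn_pmod n d_gt0.
rewrite {1}(divn_eq n d) (_ : 2 * _ = 2 * (n %/ d) * d + 2 * (n %% d)); last lia.
rewrite divnMDl //; congr addn; case: leqP => [d_le | d_gt]; last by rewrite divn_small.
by rewrite -(subnK d_le) divnDr ?dvdnn // divnn d_gt0 divn_small //; lia.
Qed.

Lemma double_divn_tail k n : (2 * n) %/ (2 * k + 3) = 2 * qB k n + (k + 2 <= rB k n).
Proof. by rewrite /qB /rB divn_double ?addn3 //; congr (_ + nat_of_bool _); lia. Qed.

Theorem lemma4 (k n : nat) :
  4 <= k -> 2 * k + 3 <= n ->
  iso_num (@Bp_adj k n) k.+1 = (2 * n) %/ (2 * k + 3).
Proof.
move=> k_ge n_ge; have k_eq : k = 2 * k./2 + odd k by rewrite -{1}(odd_double_half k) addnC mul2n.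
move: (k./2) (odd k : nat) (leq_b1 (odd k)) k_eq => p e e_le1 k_eq; subst k.
rewrite double_divn_tail; apply: iso_num_Bp => //; lia.
Qed.
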